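(* Let $n=p_1^{\alpha_1}p_2^{\alpha_2}p_3^{\alpha_3}$, where $\alpha_1,\alpha_2,\alpha_3$ are positive integers and $p_1<p_2<p_3$ are primes. Let $\{i,j,k\}=\{1,2,3\}$ with $i<j$. If $(p_i+p_j)\,\phi(p_jp_k)-p_ip_jp_k>0$, then $\deg(p_i^{\beta_i}p_j)>\deg(p_j)$ in $\mathcal{P}(C_n)$ for every $1\leq\beta_i\leq\alpha_i$.
   Context: For a finite group $G$, the power graph $\mathcal{P}(G)$ is the simple undirected graph with vertex set $G$ in which two distinct vertices are adjacent if one is an integral power of the other. $C_n$ denotes the cyclic group of order $n$, identified with $\mathbb{Z}_n=\{0,1,\ldots,n-1\}$, so a positive divisor $d$ of $n$ is regarded as the element $d\bmod n\in\mathbb{Z}_n$. $\deg(a)$ is the degree of vertex $a$ in $\mathcal{P}(C_n)$ and $\phi$ is Euler's totient function. *)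

From mathcomp Require Import all_boot all_order all_algebra all_fingroup.
Set Implicit Arguments. Unset Strict Implicit. Unset Printing Implicit Defensive.

(* Power graph of a finite group: distinct x, y adjacent iff one is an
   integral power of the other, i.e. x \in <[y]> or y \in <[x]>. *)
Definition pg_adj (gT : finGroupType) (x y : gT) : bool :=
  (x != y) && ((x \in <[y]>%g) || (y \in <[x]>%g)).

Definition pg_deg (gT : finGroupType) (x : gT) : nat :=
  #|[set y : gT | pg_adj x y]|.

(* The cyclic group C_n as the additive group 'Z_n (used for n >= 2);
   a natural number d is regarded as d mod n. *)
Definition Cn_elt (n d : nat) : 'Z_n := inZp d.

From mathcomp Require Import all_boot all_order all_algebra all_fingroup.
From mathcomp Require Import zify ring.
Set Implicit Arguments. Unset Strict Implicit. Unset Printing Implicit Defensive.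

(* In Z_N two distinct elements are adjacent iff one lies in the cyclic
   subgroup generated by the other, and z lies in <x> iff gcd(x, N) | z.
   Hence the closed neighbourhood of x depends only on d = gcd(x, N): it is
   the union of <d> = {z | d | z} and {z | gcd(z, N) | d}, whose intersection
   is {z | gcd(z, N) = d}.  These three residue counts are multiplicative over
   coprime moduli (Chinese remainder theorem) and explicit for prime powers,
   which gives a closed formula for the degree of any x when N has three
   prime factors (pg_deg_three_primes).  Comparing the formulas for
   gcd = p_j and gcd = p_i^b p_j reduces the theorem to an integer
   inequality (degree_gap_arith), proved by a case split on whether b equals
   the exponent of p_i and whether p_j divides N exactly once. *)

(* Over coprime moduli, a residue z mod [M1 * M2] is determined by its
   residues mod [M1] and mod [M2], and every pair of residues occurs. *)
Lemma card_crt (M1 M2 : nat) (q1 q2 : pred nat) :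
  0 < M1 -> 0 < M2 -> coprime M1 M2 ->
  #|[set z : 'I_(M1 * M2) | q1 (z %% M1) && q2 (z %% M2)]|
    = #|[set u : 'I_M1 | q1 u]| * #|[set v : 'I_M2 | q2 v]|.
Proof.
move=> M1pos M2pos co.
pose crt (z : 'I_(M1 * M2)) : 'I_M1 * 'I_M2 :=
  (Ordinal (ltn_pmod z M1pos), Ordinal (ltn_pmod z M2pos)).
have crt_inj : injective crt.
  move=> z1 z2 [e1 e2]; apply: val_inj.
  have : z1 == z2 %[mod M1 * M2] by rewrite chinese_remainder // e1 e2 !eqxx.
  by rewrite !modn_small // => /eqP.
have crt_bij : bijective crt.
  by apply: inj_card_bij crt_inj _; rewrite card_prod !card_ord.
rewrite -cardsX -(on_card_preimset (onW_bij _ crt_bij)).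
by apply: eq_card => z; rewrite !inE.
Qed.

Lemma gcdnM_coprime (z M1 M2 : nat) :
  coprime M1 M2 -> gcdn z (M1 * M2) = gcdn z M1 * gcdn z M2.
Proof.
move=> co; apply/eqP; rewrite eqn_dvd; apply/andP; split.
  rewrite muln_gcdl !muln_gcdr !dvdn_gcd dvdn_gcdr.
  have hz : gcdn z (M1 * M2) %| z := dvdn_gcdl _ _.
  by rewrite !(dvdn_mulr _ hz) (dvdn_mull _ hz).
have co12 : coprime (gcdn z M1) (gcdn z M2).
  by apply: (coprime_dvdl (dvdn_gcdr _ _)); apply: (coprime_dvdr (dvdn_gcdr _ _)).
by rewrite dvdn_gcd Gauss_dvd // !dvdn_gcdl dvdn_mul ?dvdn_gcdr.
Qed.

Lemma dvdn_mod_res (d z M : nat) : d %| M -> (d %| z %% M) = (d %| z).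
Proof. by move=> dM; rewrite /dvdn modn_dvdm. Qed.

(* For a divisor d of N, the three residue counts that determine degrees in
   the power graph of Z_N: [count_mult] counts the subgroup <d> (multiples
   of d), [count_gcd] the z with d in <z> (i.e. gcd(z, N) | d), and
   [count_both] the z lying in both sets (those with gcd(z, N) = d). *)
Definition count_mult (N d : nat) : nat := #|[set z : 'I_N | d %| z]|.
Definition count_gcd (N d : nat) : nat := #|[set z : 'I_N | gcdn z N %| d]|.
Definition count_both (N d : nat) : nat :=
  #|[set z : 'I_N | (d %| z) && (gcdn z N %| d)]|.

Section CountMultiplicative.
Variables (M1 M2 d1 d2 : nat).
Hypotheses (M1pos : 0 < M1) (M2pos : 0 < M2) (co : coprime M1 M2).
Hypotheses (d1M1 : d1 %| M1) (d2M2 : d2 %| M2).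

Let co12 : coprime d1 d2.
Proof. exact: coprime_dvdl d1M1 (coprime_dvdr d2M2 co). Qed.

Lemma mult_res (z : nat) : (d1 * d2 %| z) = (d1 %| z %% M1) && (d2 %| z %% M2).
Proof. by rewrite !dvdn_mod_res // Gauss_dvd. Qed.

Lemma gcd_res (z : nat) :
  (gcdn z (M1 * M2) %| d1 * d2)
    = (gcdn (z %% M1) M1 %| d1) && (gcdn (z %% M2) M2 %| d2).
Proof.
rewrite !gcdn_modl gcdnM_coprime //.
have g1M1 : gcdn z M1 %| M1 := dvdn_gcdr _ _.
have g2M2 : gcdn z M2 %| M2 := dvdn_gcdr _ _.
apply/idP/andP => [h | [h1 h2]]; last exact: dvdn_mul.
have h1 : gcdn z M1 %| d1 * d2 by apply: dvdn_trans h; apply: dvdn_mulr.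
have h2 : gcdn z M2 %| d1 * d2 by apply: dvdn_trans h; apply: dvdn_mull.
rewrite Gauss_dvdl ?(coprime_dvdl g1M1 (coprime_dvdr d2M2 co)) // in h1.
by rewrite Gauss_dvdr ?(coprime_dvdl g2M2 (coprime_dvdr d1M1 _)) 1?coprime_sym in h2.
Qed.

Lemma count_mult_mul : count_mult (M1 * M2) (d1 * d2) = count_mult M1 d1 * count_mult M2 d2.
Proof.
rewrite /count_mult -(card_crt (dvdn d1) (dvdn d2)) //.
by apply: eq_card => z; rewrite !inE mult_res.
Qed.

Lemma count_gcd_mul : count_gcd (M1 * M2) (d1 * d2) = count_gcd M1 d1 * count_gcd M2 d2.
Proof.
rewrite /count_gcd -(card_crt (fun u => gcdn u M1 %| d1) (fun v => gcdn v M2 %| d2)) //.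
by apply: eq_card => z; rewrite !inE gcd_res.
Qed.

Lemma count_both_mul : count_both (M1 * M2) (d1 * d2) = count_both M1 d1 * count_both M2 d2.
Proof.
rewrite /count_both -(card_crt (fun u => (d1 %| u) && (gcdn u M1 %| d1))
                               (fun v => (d2 %| v) && (gcdn v M2 %| d2))) //.
by apply: eq_card => z; rewrite !inE mult_res gcd_res andbACA.
Qed.

End CountMultiplicative.

Lemma mem_cycle_Zp (m : nat) (x z : 'I_m.+1) : (z \in <[x]>%g) = (gcdn x m.+1 %| z).
Proof.
apply/cycleP/idP => [[k ->] | dvd_z].
  rewrite Zp_expg /= dvdn_mod_res ?dvdn_gcdr //.
  by rewrite dvdn_mulr ?dvdn_gcdl.
have [x0 | xpos] := posnP x.
  exists 0; apply: val_inj; rewrite Zp_expg /= x0 mod0n.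
  by move: dvd_z (ltn_ord z); rewrite x0 gcd0n; case: (z : nat) => // z' /dvdn_leq; lia.
case: (egcdnP m.+1 xpos) => km kn bezout _; case/dvdnP: dvd_z => t ht.
exists (km * t); apply: val_inj; rewrite Zp_expg /= mulnA (mulnC x) bezout ht.
by rewrite mulnDl mulnAC modnMDl [_ * t]mulnC -ht modn_small.
Qed.

(* The degree of x in the power graph of Z_N depends only on d = gcd(x, N):
   the closed neighbourhood of x is <d> together with {z | d \in <z>}. *)
Lemma pg_deg_Zp (m : nat) (x : 'I_m.+1) :
  (pg_deg x).+1 + count_both m.+1 (gcdn x m.+1)
    = count_mult m.+1 (gcdn x m.+1) + count_gcd m.+1 (gcdn x m.+1).
Proof.
set d := gcdn x m.+1.
pose S := [set z : 'I_m.+1 | d %| z] :|: [set z : 'I_m.+1 | gcdn z m.+1 %| d].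
have -> : count_both m.+1 d
          = #|[set z : 'I_m.+1 | d %| z] :&: [set z : 'I_m.+1 | gcdn z m.+1 %| d]|.
  by apply: eq_card => z; rewrite !inE.
have xS : x \in S by rewrite !inE dvdn_gcdl.
rewrite /count_mult /count_gcd -cardsUI -/S (cardsD1 x S) xS; congr (_.+1 + _).
rewrite /pg_deg; apply: eq_card => z; rewrite !inE /pg_adj !mem_cycle_Zp eq_sym.
congr (_ && _); rewrite orbC; congr (_ || _).
by rewrite -/d dvdn_gcd dvdn_gcdr andbT.
Qed.

Lemma count_mult_dvd (M d : nat) : 0 < M -> d %| M -> count_mult M d = M %/ d.
Proof.
move=> Mpos dM; have dpos : 0 < d := dvdn_gt0 Mpos dM.
case/dvdnP: dM Mpos => t -> _; rewrite mulnK //.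
have kd_lt (k : 'I_t) : k * d < t * d by rewrite ltn_pmul2r.
pose f (k : 'I_t) : 'I_(t * d) := Ordinal (kd_lt k).
have f_inj : injective f by move=> k1 k2 [] /eqP; rewrite eqn_pmul2r // => /eqP /val_inj.
rewrite -[t in RHS]card_ord -(card_imset _ f_inj) /count_mult.
apply: eq_card => u; rewrite !inE; apply/idP/imsetP => [/dvdnP [k hk] | [k _ ->]].
  have hkt : k < t by rewrite -(ltn_pmul2r dpos) -hk.
  by exists (Ordinal hkt) => //; apply: val_inj.
exact: dvdn_mull.
Qed.

Section PrimePowerCounts.
Variables (P a : nat).
Hypothesis pP : prime P.

Let P1 : 1 < P := prime_gt1 pP.
Let Pa_pos : 0 < P ^ a. Proof. by rewrite expn_gt0 prime_gt0. Qed.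

Lemma gcd_pfactor_dvd (s u : nat) :
  s < a -> (gcdn u (P ^ a) %| P ^ s) = ~~ (P ^ s.+1 %| u).
Proof.
move=> lt_sa; have /(dvdn_pfactor _ _ pP) [e _ def_g] := dvdn_gcdr u (P ^ a).
have -> : (P ^ s.+1 %| u) = (P ^ s.+1 %| gcdn u (P ^ a)).
  by rewrite dvdn_gcd dvdn_Pexp2l // lt_sa andbT.
by rewrite def_g !dvdn_Pexp2l // -ltnNge.
Qed.

(* [pquot P a s] = P^a / P^s, that is P^(a - s) for s <= a and 0 beyond. *)
Definition pquot (s : nat) : int := Posz (P ^ a %/ P ^ s).

Lemma count_mult_pfactor (s : nat) : s <= a -> Posz (count_mult (P ^ a) (P ^ s)) = pquot s.
Proof. by move=> le_sa; rewrite count_mult_dvd ?Pa_pos ?dvdn_Pexp2l. Qed.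

Lemma count_gcd_pfactor (s : nat) :
  Posz (count_gcd (P ^ a) (P ^ s)) = (pquot 0 - pquot s.+1)%R.
Proof.
rewrite /pquot expn0 divn1 subzn ?leq_div // /count_gcd.
have [lt_sa | le_as] := ltnP s a.
  have -> : [set u : 'I_(P ^ a) | gcdn u (P ^ a) %| P ^ s]
          = ~: [set u : 'I_(P ^ a) | P ^ s.+1 %| u].
    by apply/setP => u; rewrite !inE gcd_pfactor_dvd.
  by rewrite cardsCs setCK card_ord -count_mult_dvd ?Pa_pos ?dvdn_Pexp2l.
rewrite divn_small ?ltn_exp2l // subn0 -[in RHS](card_ord (P ^ a)).
congr Posz; apply: eq_card => u; rewrite !inE.
by apply: dvdn_trans (dvdn_gcdr _ _) _; rewrite dvdn_Pexp2l.
Qed.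

Lemma count_both_pfactor (s : nat) :
  s <= a -> Posz (count_both (P ^ a) (P ^ s)) = (pquot s - pquot s.+1)%R.
Proof.
move=> le_sa; rewrite /pquot subzn ?leq_div2l ?expn_gt0 ?prime_gt0 ?leq_exp2l //.
congr Posz; rewrite -count_mult_dvd ?Pa_pos ?dvdn_Pexp2l // /count_both.
have [lt_sa | le_as] := ltnP s a.
  rewrite -count_mult_dvd ?Pa_pos ?dvdn_Pexp2l // /count_mult.
  have sub_mult : [set u : 'I_(P ^ a) | P ^ s.+1 %| u] \subset [set u : 'I_(P ^ a) | P ^ s %| u].
    by apply/subsetP => u; rewrite !inE; apply: dvdn_trans; rewrite dvdn_Pexp2l.
  rewrite -(setIidPr sub_mult) -cardsD; apply: eq_card => u.
  by rewrite !inE gcd_pfactor_dvd // andbC.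
rewrite divn_small ?ltn_exp2l // subn0; apply: eq_card => u; rewrite !inE.
by rewrite (dvdn_trans (dvdn_gcdr _ _)) ?andbT // dvdn_Pexp2l.
Qed.

Lemma pquot_gt0 (s : nat) : s <= a -> (0 < pquot s)%R.
Proof. by move=> le_sa; rewrite ltz_nat divn_gt0 ?expn_gt0 ?prime_gt0 ?leq_exp2l. Qed.

Lemma pquot_shift (s k : nat) : s + k <= a -> pquot s = (Posz (P ^ k) * pquot (s + k))%R.
Proof.
move=> le_ska; rewrite /pquot -PoszM -!expnB ?prime_gt0 -?expnD //; last first.
  by apply: leq_trans le_ska; apply: leq_addr.
by congr (Posz (P ^ _)); lia.
Qed.

Lemma pquot_cases (s : nat) : s <= a ->
  (pquot s = (Posz P * pquot s.+1)%R /\ (0 < pquot s.+1)%R)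
  \/ (pquot s = 1 /\ pquot s.+1 = 0).
Proof.
rewrite leq_eqVlt => /orP [/eqP -> | lt_sa].
  by right; rewrite /pquot divnn expn_gt0 prime_gt0 // divn_small // ltn_exp2l.
by left; rewrite (pquot_shift (k := 1)) ?addn1 ?pquot_gt0.
Qed.
End PrimePowerCounts.


Lemma coprime_prime_powers (P Q a c : nat) :
  prime P -> prime Q -> P != Q -> coprime (P ^ a) (Q ^ c).
Proof.
by move=> pP pQ neq_PQ; apply/coprimeXl/coprimeXr; rewrite prime_coprime ?dvdn_prime2.
Qed.

Section ThreePrimes.
Import Order.TTheory GRing.Theory Num.Theory.
Local Open Scope ring_scope.

(* Degree formula in the power graph of Z_N with N = P^a Q^c R^f: for x with
   gcd(x, N) = P^s Q^t R^u, the closed neighbourhood of x has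
   |<d>| + #{z | d in <z>} - #{z | gcd(z, N) = d} elements, each factor being
   a product of prime-power counts. *)
Lemma pg_deg_three_primes (P Q R a c f s t u m : nat) (x : 'I_m.+1) :
  prime P -> prime Q -> prime R -> P != Q -> P != R -> Q != R ->
  m.+1 = (P ^ a * Q ^ c * R ^ f)%N -> (s <= a)%N -> (t <= c)%N -> (u <= f)%N ->
  gcdn x m.+1 = (P ^ s * Q ^ t * R ^ u)%N ->
  (pg_deg x)%:Z + 1
    = pquot P a s * pquot Q c t * pquot R f u
      + (pquot P a 0 - pquot P a s.+1) * (pquot Q c 0 - pquot Q c t.+1)
        * (pquot R f 0 - pquot R f u.+1)
      - (pquot P a s - pquot P a s.+1) * (pquot Q c t - pquot Q c t.+1)
        * (pquot R f u - pquot R f u.+1).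
Proof.
move=> pP pQ pR nPQ nPR nQR defN le_sa le_tc le_uf def_d.
have pos (X e : nat) : prime X -> (0 < X ^ e)%N by move=> pX; rewrite expn_gt0 prime_gt0.
have coPQ := coprime_prime_powers a c pP pQ nPQ.
have coPQR : coprime (P ^ a * Q ^ c) (R ^ f).
  by rewrite coprimeMl !coprime_prime_powers.
have dvdPQ : (P ^ s * Q ^ t %| P ^ a * Q ^ c)%N by rewrite dvdn_mul ?dvdn_exp2l.
have := pg_deg_Zp x; rewrite def_d defN.
rewrite !count_mult_mul ?count_gcd_mul ?count_both_mul ?muln_gt0 ?pos ?dvdn_exp2l //.
move/(congr1 Posz); rewrite !PoszD !PoszM.
rewrite !count_mult_pfactor ?count_gcd_pfactor ?count_both_pfactor // => deg_eq.
by rewrite -deg_eq addrK -addn1 PoszD.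
Qed.

(* The inequality behind the theorem, in the variables of the degree formula:
   A = P y w is P^a with y = P^(b-1) and w = P^a / P^b, w' = P^a / P^(b+1),
   q = Q^c / Q, q' = Q^c / Q^2 and r = R^f / R.  In each of the four cases
   (b < a or b = a, c > 1 or c = 1) the difference of the two degrees is a
   product of positive factors. *)
Lemma degree_gap_arith (P Q R y w w' q q' r : int) :
  1 < P -> P < Q -> 1 < R -> 0 < y -> 0 < r ->
  P * Q * R < (P + Q) * ((Q - 1) * (R - 1)) ->
  (w = P * w' /\ 0 < w') \/ (w = 1 /\ w' = 0) ->
  (q = Q * q' /\ 0 < q') \/ (q = 1 /\ q' = 0) ->
  let deg ws ws' := ws * q * (R * r) + (P * y * w - ws') * (Q * q - q') * (R * r - r)
                    - (ws - ws') * (q - q') * (R * r - r) in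
  deg (P * y * w) (y * w) < deg w w'.
Proof.
move=> P1 PQ R1 ypos rpos cond hw hq /=; rewrite -subr_gt0.
have gap_pos : 0 < (P + Q) * ((Q - 1) * (R - 1)) - P * Q * R by lia.
have RQ_pos : 0 < (R - 1) * (Q - 1) - P by nia.
have Py_pos : 0 < P * y - 1 by nia.
case: hw => [[-> w'pos] | [-> ->]]; case: hq => [[-> q'pos] | [-> ->]].
- have : 0 < w' * q' * r * (P * y - 1) * ((P + Q) * ((Q - 1) * (R - 1)) - P * Q * R).
    by rewrite !mulr_gt0.
  lia.
- have : 0 < w' * r * (P * y - 1) * ((R - 1) * (Q - 1) - P) by rewrite !mulr_gt0.
  lia.
- have factor_pos : 0 < (R - 1) * (Q - 1) * (P * y - 1 + y * Q) - Q * R * (P * y - 1).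
    have : 0 < P * ((R - 1) * (Q - 1) * (P * y - 1 + y * Q) - Q * R * (P * y - 1)).
      have h1 : 0 < (P * y - 1) * ((P + Q) * ((Q - 1) * (R - 1)) - P * Q * R) by rewrite mulr_gt0.
      have h2 : 0 < (R - 1) * (Q - 1) * Q by rewrite !mulr_gt0 ?subr_gt0 //; lia.
      lia.
    by rewrite pmulr_rgt0 //; lia.
  have : 0 < q' * r * ((R - 1) * (Q - 1) * (P * y - 1 + y * Q) - Q * R * (P * y - 1)).
    by rewrite !mulr_gt0.
  lia.
- have : 0 < r * (y * ((R - 1) * (Q - 1) - P) + 1) by rewrite mulr_gt0 // addr_gt0 ?mulr_gt0.
  lia.
Qed.

Lemma pg_deg_gap (P Q R a c f b m : nat) (x y : 'I_m.+1) :
  prime P -> prime Q -> prime R -> (P < Q)%N -> Q != R -> P != R ->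
  (0 < c)%N -> (0 < f)%N -> (1 <= b <= a)%N ->
  (P * Q * R < (P + Q) * (Q.-1 * R.-1))%N ->
  m.+1 = (P ^ a * Q ^ c * R ^ f)%N ->
  gcdn x m.+1 = Q -> gcdn y m.+1 = (P ^ b * Q)%N ->
  (pg_deg x < pg_deg y)%N.
Proof.
move=> pP pQ pR lt_PQ nQR nPR c_pos f_pos /andP [b_pos le_ba] cond defN gcd_x gcd_y.
have nPQ : P != Q by rewrite neq_ltn lt_PQ.
have P_pos := prime_gt0 pP; have Q_pos := prime_gt0 pQ; have R_pos := prime_gt0 pR.
have degx := pg_deg_three_primes (x := x) pP pQ pR nPQ nPR nQR defN (leq0n a) c_pos (leq0n f).
have degy := pg_deg_three_primes (x := y) pP pQ pR nPQ nPR nQR defN le_ba c_pos (leq0n f).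
rewrite gcd_x expn0 mul1n muln1 expn1 in degx; move/(_ erefl) in degx.
rewrite gcd_y expn0 muln1 expn1 in degy; move/(_ erefl) in degy.
have eA0 : pquot P a 0 = P%:Z * (P ^ b.-1)%:Z * pquot P a b.
  by rewrite (@pquot_shift P a pP 0 b) // -PoszM -expnS prednK.
have eA1 : pquot P a 1 = (P ^ b.-1)%:Z * pquot P a b.
  by rewrite (@pquot_shift P a pP 1 b.-1) ?add1n ?prednK.
have eQ : pquot Q c 0 = Q%:Z * pquot Q c 1 by rewrite (@pquot_shift Q c pQ 0 1) ?expn1.
have eR : pquot R f 0 = R%:Z * pquot R f 1 by rewrite (@pquot_shift R f pR 0 1) ?expn1.
rewrite eA0 eA1 eQ eR in degx degy.
rewrite -ltz_nat -(ltrD2r 1) degx degy.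
apply: degree_gap_arith.
- by rewrite ltz_nat prime_gt1.
- by rewrite ltz_nat.
- by rewrite ltz_nat prime_gt1.
- by rewrite ltz_nat expn_gt0 P_pos.
- exact: pquot_gt0.
- by move: cond; rewrite -ltz_nat !PoszM PoszD !predn_int.
- exact: pquot_cases.
- exact: pquot_cases.
Qed.

End ThreePrimes.

Lemma gcd_Cn_elt (n d : nat) : 1 < n -> d %| n -> gcdn (Cn_elt n d) (Zp_trunc n).+2 = d.
Proof. by move=> n_gt1 dvd_dn; rewrite /= Zp_cast // gcdn_modl; apply/gcdn_idPl. Qed.

Lemma Cn_pg_deg_gap (P Q R a c f b n : nat) :
  prime P -> prime Q -> prime R -> P < Q -> Q != R -> P != R ->
  0 < c -> 0 < f -> 1 <= b <= a ->
  (0 < (P + Q)%:Z * (totient (Q * R))%:Z - (P * Q * R)%:Z)%R ->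
  n = P ^ a * Q ^ c * R ^ f ->
  pg_deg (Cn_elt n Q) < pg_deg (Cn_elt n (P ^ b * Q)).
Proof.
move=> pP pQ pR lt_PQ nQR nPR c_pos f_pos hb cond def_n.
have Q_Qc : Q %| Q ^ c by rewrite dvdn_exp.
have dvd_Q : Q %| n by rewrite def_n; apply/dvdn_mulr/dvdn_mull.
have dvd_PbQ : P ^ b * Q %| n.
  case/andP: hb => _ le_ba; rewrite def_n; apply/dvdn_mulr/dvdn_mul => //.
  exact: dvdn_exp2l.
have n_pos : 0 < n by rewrite def_n !muln_gt0 !expn_gt0 !prime_gt0.
have n_gt1 : 1 < n := leq_trans (prime_gt1 pQ) (dvdn_leq n_pos dvd_Q).
have tot_QR : totient (Q * R) = Q.-1 * R.-1.
  by rewrite totient_coprime ?totient_prime // prime_coprime // dvdn_prime2.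
apply: (pg_deg_gap pP pQ pR lt_PQ nQR nPR c_pos f_pos hb).
- by move: cond; rewrite tot_QR Num.Theory.subr_gt0 -PoszM ltz_nat.
- by rewrite Zp_cast.
- exact: gcd_Cn_elt.
- exact: gcd_Cn_elt.
Qed.

Lemma ord3_triples (i j k : 'I_3) : i < j -> k != i -> k != j ->
  [\/ (i, j, k) = (ord0, inord 1, inord 2), (i, j, k) = (ord0, inord 2, inord 1)
    | (i, j, k) = (inord 1, inord 2, ord0)].
Proof.
case: i j k => [[|[|[|?]]] ?] // [[|[|[|?]]] ?] // [[|[|[|?]]] ?] //= _ _ _;
  [constructor 1 | constructor 2 | constructor 3];
  by congr (_, _, _); apply: val_inj; rewrite /= ?inordK.
Qed.

Unset Implicit Arguments.

Theorem lemma5p2 (p a : 'I_3 -> nat)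
  (hp : forall t, prime (p t)) (ha : forall t, 0 < a t)
  (hlt01 : p ord0 < p (inord 1)) (hlt12 : p (inord 1) < p (inord 2))
  (i j k : 'I_3) (hij : (i < j)%N) (hki : k != i) (hkj : k != j)
  (hcond : (0 < ((p i + p j)%:Z * (totient (p j * p k))%:Z
                 - (p i * p j * p k)%:Z))%R) :
  let n := (p ord0 ^ a ord0 * p (inord 1) ^ a (inord 1) * p (inord 2) ^ a (inord 2))%N in
  forall b : nat, (1 <= b <= a i)%N ->
    (pg_deg (Cn_elt n (p j)) < pg_deg (Cn_elt n (p i ^ b * p j)))%N.
Proof.
move=> n b hb.
have hlt02 := ltn_trans hlt01 hlt12.
have [lt_ij neq_jk neq_ik def_n] :
    [/\ p i < p j, p j != p k, p i != p k & n = p i ^ a i * p j ^ a j * p k ^ a k].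
  case: (ord3_triples hij hki hkj) => -[-> -> ->];
    by split; rewrite ?neq_ltn ?hlt01 ?hlt12 ?hlt02 ?orbT //= /n; ring.
exact: Cn_pg_deg_gap (hp i) (hp j) (hp k) lt_ij neq_jk neq_ik (ha j) (ha k) hb hcond def_n.
Qed.
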